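(* Let $K\ge 2$, let $\Delta^K\subset\mathbb{R}^K$ be the probability simplex, and identify outcomes $Y$ with one-hot vectors in $\mathbb{R}^K$. Let $\mu_t\in\Delta^K$, $\mu_t^*\in\Delta^K$, $c_t\in\mathbb{R}_+^K$ with $\mu_t+c_t\in[0,1]^K$ and $\mu_t-c_t\in[0,1]^K$. Let $a_t$ be an action and $l_t$ a loss; write $l\in\mathbb{R}^K$ for the vector $l_i=l_t(a_t,Y=i)$. Define $$L_t^{\max}=\max_{\tilde\mu\in\Delta^K,\ \tilde\mu\in[\mu_t-c_t,\mu_t+c_t]}\mathbb{E}_{Y\sim\tilde\mu}[l_t(a_t,Y)],\qquad L_t^*=\mathbb{E}_{Y\sim\mu_t^*}[l_t(a_t,Y)],$$ (where $\tilde\mu\in[\mu_t-c_t,\mu_t+c_t]$ is coordinatewise), and for $g_t\in\mathbb{R}^K$, $$L_t^{\mathrm{pay}}=L_t^*+\mathbb{E}_{Y\sim\mu_t^*}\big[\langle g_t,\mu_t-Y\rangle+\langle|g_t|,c_t\rangle\big],$$ with $|g_t|$ taken coordinatewise. Let $\gamma^*\in\mathbb{R}$ attain $\inf_{\gamma\in\mathbb{R}}\langle c_t,|l-\gamma\mathbf{1}|\rangle$. If $g_t=l-\gamma^*\mathbf{1}$, then $L_t^{\mathrm{pay}}=L_t^{\max}$.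
   Context: $\mathbf{1}$ denotes the all-ones vector in $\mathbb{R}^K$ and $|v|$ for a vector $v$ denotes the coordinatewise absolute value. *)

From mathcomp Require Import all_boot all_order all_algebra.
Set Implicit Arguments. Unset Strict Implicit. Unset Printing Implicit Defensive.
Import Order.TTheory GRing.Theory Num.Theory.
Local Open Scope ring_scope.

Section Defs.
Variables (R : realFieldType) (K : nat).

Definition dotv (u v : 'I_K -> R) : R := \sum_(i < K) u i * v i.

Definition absv (v : 'I_K -> R) : 'I_K -> R := fun i => `|v i|.

Definition onehot (j : 'I_K) : 'I_K -> R := fun i => (i == j)%:R.

Definition in_simplex (m : 'I_K -> R) : Prop :=
  (forall i, 0 <= m i) /\ \sum_(i < K) m i = 1.

(* E_{Y ~ m}[f Y], Y identified with outcome index *)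
Definition expect (m : 'I_K -> R) (f : 'I_K -> R) : R := \sum_(j < K) m j * f j.

Definition feasible (mu c mt : 'I_K -> R) : Prop :=
  in_simplex mt /\ (forall i, mu i - c i <= mt i <= mu i + c i).

Definition is_Lmax (mu c l : 'I_K -> R) (v : R) : Prop :=
  (exists2 mt, feasible mu c mt & v = expect mt l) /\
  (forall mt, feasible mu c mt -> expect mt l <= v).

Definition Lstar (mustar l : 'I_K -> R) : R := expect mustar l.

Definition Lpay (mu mustar c g l : 'I_K -> R) : R :=
  Lstar mustar l +
  expect mustar (fun j => dotv g (fun i => mu i - onehot j i) + dotv (absv g) c).
End Defs.

From mathcomp Require Import all_boot all_order all_algebra.
From mathcomp Require Import lra.
Set Implicit Arguments. Unset Strict Implicit. Unset Printing Implicit Defensive.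
Import Order.TTheory GRing.Theory Num.Theory.
Local Open Scope ring_scope.

(* With [d = l - gamma*], any feasible [mt] satisfies
   [<mt, l> - <mu, l> = <mt - mu, d> <= <c, |d|>], because [mt - mu] sums to 0
   and is bounded by [c] coordinatewise; and [L^pay] simplifies to
   [<mu, l> + <c, |d|>].  The bound is attained by [mt = mu + c * tau] with
   [tau_i d_i = |d_i|], [|tau_i| <= 1] and [<c, tau> = 0].  Such a [tau] is
   [sg d] on the support of [d], completed by a common value on its zero set;
   the weights can be balanced because the one-sided derivatives of
   [gamma |-> <c, |l - gamma|>] at the minimiser [gamma*] are nonnegative, i.e.
   [|<c, sg d>| <= <c, [d == 0]>]. *)

Section Vectors.
Variables (R : realFieldType) (K : nat).
Implicit Types (u v m c d l : 'I_K -> R).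

Lemma dotvC u v : dotv u v = dotv v u.
Proof. by apply: eq_bigr => i _; rewrite mulrC. Qed.

Lemma dotv_subr_cst m u (gamma : R) :
  dotv m (fun i => u i - gamma) = dotv m u - (\sum_(i < K) m i) * gamma.
Proof.
by rewrite /dotv mulr_suml -sumrB; apply: eq_bigr => i _; rewrite mulrBr.
Qed.

Lemma dotv_onehot v j : dotv v (onehot R j) = v j.
Proof.
rewrite /dotv (bigD1 j) //= /onehot eqxx mulr1 big1 ?addr0 // => i /negbTE ->.
by rewrite mulr0.
Qed.

Lemma LpayE mu mustar c g l : \sum_(i < K) mustar i = 1 ->
  Lpay mu mustar c g l =
    expect mustar l + dotv g mu - dotv mustar g + dotv (absv g) c.
Proof.
move=> mustar1; rewrite /Lpay /Lstar /expect.
have dotv_mu_onehot j :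
    dotv g (fun i => mu i - onehot R j i) = dotv g mu - g j.
  by rewrite -dotv_onehot /dotv -sumrB; apply: eq_bigr => i _; rewrite mulrBr.
under [X in _ + X = _]eq_bigr do rewrite dotv_mu_onehot mulrDr mulrBr.
by rewrite big_split sumrB /= -!mulr_suml mustar1 !mul1r !addrA.
Qed.

Lemma Lpay_shift mu mustar c l (gamma : R) :
  \sum_(i < K) mu i = 1 -> \sum_(i < K) mustar i = 1 ->
  Lpay mu mustar c (fun i => l i - gamma) l =
    expect mu l + dotv c (absv (fun i => l i - gamma)).
Proof.
move=> mu1 mustar1; rewrite LpayE // dotvC dotv_subr_cst dotv_subr_cst.
rewrite mu1 mustar1 !mul1r [dotv (absv _) c]dotvC /expect /dotv; lra.
Qed.

Lemma expect_feasible_le mu c mt l (gamma : R) :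
  \sum_(i < K) mu i = 1 -> feasible mu c mt ->
  expect mt l <= expect mu l + dotv c (absv (fun i => l i - gamma)).
Proof.
move=> mu1 [[_ mt1] box]; rewrite -lerBlDl.
have -> : expect mt l - expect mu l =
    dotv (fun i => mt i - mu i) (fun i => l i - gamma).
  rewrite dotv_subr_cst sumrB mt1 mu1 subrr mul0r subr0 /expect /dotv -sumrB.
  by apply: eq_bigr => i _; rewrite mulrBl.
apply: ler_sum => i _; apply: le_trans (ler_norm _) _.
by rewrite normrM /absv ler_wpM2r // ler_distl.
Qed.

Lemma feasible_perturb mu c tau :
  \sum_(i < K) mu i = 1 -> (forall i, 0 <= mu i - c i) ->
  (forall i, 0 <= c i) -> (forall i, `|tau i| <= 1) -> dotv c tau = 0 ->
  feasible mu c (fun i => mu i + c i * tau i).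
Proof.
move=> mu1 mu_ge_c c_ge0 tau_le1 ctau0.
have tau_bounds i : -1 <= tau i <= 1 by rewrite -ler_norml.
split; first split.
- move=> i; have := mu_ge_c i; have := c_ge0 i.
  by have /andP[] := tau_bounds i; nra.
- by rewrite big_split /= mu1 -/(dotv c tau) ctau0 addr0.
- move=> i; have := c_ge0 i; have /andP[] := tau_bounds i.
  by move=> ? ? ?; apply/andP; split; nra.
Qed.

Lemma expect_perturb mu c tau l (gamma : R) :
  dotv c tau = 0 -> (forall i, tau i * (l i - gamma) = `|l i - gamma|) ->
  expect (fun i => mu i + c i * tau i) l =
    expect mu l + dotv c (absv (fun i => l i - gamma)).
Proof.
move=> ctau0 taul; rewrite /expect /dotv.
under eq_bigr do rewrite mulrDl; rewrite big_split /=; congr (_ + _).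
have shift := dotv_subr_cst (fun i => c i * tau i) l gamma.
rewrite /= -/(dotv c tau) ctau0 mul0r subr0 in shift.
rewrite -/(dotv (fun i => c i * tau i) l) -shift.
by apply: eq_bigr => i _; rewrite -mulrA taul.
Qed.

End Vectors.

Lemma norm_subr_sg (R : realDomainType) (x t : R) :
  (x != 0 -> `|t| <= `|x|) ->
  `|x - t| = `|x| - t * Num.sg x + `|t| * (x == 0)%:R.
Proof.
move=> small; case: (ltrgtP x 0) => [x_lt0|x_gt0|->].
- have := small (ltr0_neq0 x_lt0); rewrite ltr0_sg // (ltr0_norm x_lt0).
  rewrite mulr0 addr0 ler_norml => /andP[xt _].
  rewrite ler0_norm; lra.
- have := small (lt0r_neq0 x_gt0); rewrite gtr0_sg // (gtr0_norm x_gt0).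
  rewrite mulr0 addr0 ler_norml => /andP[_ tx].
  rewrite ger0_norm; lra.
- by rewrite sgr0 normr0 sub0r normrN mulr0 subr0 mulr1 add0r.
Qed.

Lemma exists_norm_lbound (R : realDomainType) (I : finType) (d : I -> R) :
  exists2 e : R, 0 < e & forall i, d i != 0 -> e <= `|d i|.
Proof.
exists (\big[Order.min/1]_(i | d i != 0) `|d i|).
- by apply/bigmin_gtP; split => // i; rewrite normr_gt0.
- by move=> i d_neq0; exact: bigmin_le_cond.
Qed.

Section Balance.
Variables (R : realFieldType) (K : nat).
Implicit Types (c d l : 'I_K -> R).

Lemma dotv_norm_shift c d (t : R) :
  (forall i, d i != 0 -> `|t| <= `|d i|) ->
  dotv c (absv (fun i => d i - t)) =
    dotv c (absv d) - t * dotv c (fun i => Num.sg (d i))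
    + `|t| * dotv c (fun i => (d i == 0)%:R).
Proof.
move=> small; rewrite /dotv /absv !mulr_sumr -sumrB -big_split /=.
apply: eq_bigr => i _; rewrite norm_subr_sg; last exact: small.
by rewrite mulrDr mulrBr mulrCA [`|t| * _]mulrCA.
Qed.

Lemma minimizer_balance c l (gamma : R) :
  (forall gamma', dotv c (absv (fun i => l i - gamma)) <=
                  dotv c (absv (fun i => l i - gamma'))) ->
  `|dotv c (fun i => Num.sg (l i - gamma))| <=
    dotv c (fun i => (l i - gamma == 0)%:R).
Proof.
move=> opt; set d := fun i => l i - gamma in opt *.
have [e e_gt0 small] := exists_norm_lbound d.
have gain t : `|t| <= e ->
    0 <= - t * dotv c (fun i => Num.sg (d i))
         + `|t| * dotv c (fun i => (d i == 0)%:R).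
  move=> te; have := opt (gamma + t).
  have -> : dotv c (absv (fun i => l i - (gamma + t))) =
             dotv c (absv (fun i => d i - t)).
    by apply: eq_bigr => i _; rewrite /absv /d opprD addrA.
  rewrite (@dotv_norm_shift c d t); first lra.
  by move=> i /small; apply: le_trans.
have := gain e; have := gain (- e).
rewrite normrN gtr0_norm // ler_norml; nra.
Qed.

Lemma balanced_sign_selection c d : (forall i, 0 <= c i) ->
  `|dotv c (fun i => Num.sg (d i))| <= dotv c (fun i => (d i == 0)%:R) ->
  exists tau : 'I_K -> R, [/\ forall i, `|tau i| <= 1, dotv c tau = 0
                            & forall i, tau i * d i = `|d i|].
Proof.
move=> c_ge0; set A := dotv c _; set Z := dotv c _ => bal.
have Z_ge0 : 0 <= Z by apply: sumr_ge0 => i _; rewrite mulr_ge0.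
(* When [Z = 0], also [A = 0], and [s = 0] because [x / 0 = 0]. *)
set s := - A / Z.
have s_le1 : `|s| <= 1.
  have [Z0|Z_neq0] := eqVneq Z 0; first by rewrite /s Z0 invr0 mulr0 normr0.
  have Z_gt0 : 0 < Z by rewrite lt_def Z_neq0.
  by rewrite /s normrM normrN normfV (gtr0_norm Z_gt0) ler_pdivrMr // mul1r.
exists (fun i => Num.sg (d i) + s * (d i == 0)%:R); split.
- move=> i; have [->|d_neq0] := eqVneq (d i) 0.
    by rewrite sgr0 add0r mulr1.
  by rewrite mulr0 addr0 normr_sg d_neq0.
- have -> : dotv c (fun i => Num.sg (d i) + s * (d i == 0)%:R) = A + s * Z.
    rewrite /A /Z /dotv mulr_sumr -big_split.
    by apply: eq_bigr => i _; rewrite mulrDr mulrCA.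
  have [Z0|Z_neq0] := eqVneq Z 0.
    by move: bal; rewrite Z0 normr_le0 => /eqP ->; rewrite mulr0 addr0.
  by rewrite /s !mulNr divfK // addrN.
- move=> i; have [->|d_neq0] := eqVneq (d i) 0; first by rewrite !mulr0 normr0.
  by rewrite mulr0 addr0 normrEsg.
Qed.

End Balance.

Theorem proposition3 (R : realFieldType) (K : nat) (hK : (2 <= K)%N)
  (mu mustar c : 'I_K -> R)
  (hmu : in_simplex mu) (hmustar : in_simplex mustar)
  (hc : forall i, 0 <= c i)
  (hplus : forall i, 0 <= mu i + c i <= 1)
  (hminus : forall i, 0 <= mu i - c i <= 1)
  (A : Type) (a : A) (loss : A -> 'I_K -> R)
  (gammastar : R)
  (hgamma : forall gamma : R,
     dotv c (absv (fun i => loss a i - gammastar)) <=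
     dotv c (absv (fun i => loss a i - gamma)))
  (g : 'I_K -> R) (hg : g = (fun i => loss a i - gammastar)) :
  is_Lmax mu c (loss a) (Lpay mu mustar c g (loss a)).
Proof.
case: hmu => _ mu1; case: hmustar => _ mustar1; subst g.
rewrite Lpay_shift //.
have [tau [tau_le1 ctau0 tau_sign]] :=
  balanced_sign_selection hc (minimizer_balance hgamma).
split.
- exists (fun i => mu i + c i * tau i); last exact/esym/expect_perturb.
  by apply: feasible_perturb => // i; have /andP[] := hminus i.
- by move=> mt; apply: expect_feasible_le.
Qed.
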